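(* Let $G$ and $H$ be two vertex-disjoint graphs and $u\in V(G)$. Then $\gamma_{gr}(G_{u\hookleftarrow H})=\max \{\gamma_{gr}(G),\ \gamma_{gr}^u(G)+\gamma_{gr}(H)-1\}$.
   Context: All graphs are finite and simple; $N[v]$ is the closed neighborhood. $G_{u\hookleftarrow H}$ is the graph obtained from $G$ by replacing $u$ by $H$: vertex set $(V(G)\setminus\{u\})\cup V(H)$, edges those of $G-u$, those of $H$, and all edges joining a vertex of $V(H)$ to a vertex of $N(u)$. For a sequence $S=(v_1,\dots,v_k)$ of distinct vertices, $\widehat S=\{v_1,\dots,v_k\}$, $|S|=k$, $PN_S(v_i)=N[v_i]\setminus\bigcup_{j<i}N[v_j]$. $S$ is a legal dominating sequence if $\widehat S$ is dominating and each $PN_S(v_i)\ne\emptyset$; $\gamma_{gr}(G)$ is the maximum length of such a sequence. For such $S$, the footprinter $f_S(x)$ of $x$ is the unique $v\in\widehat S$ with $x\in PN_S(v)$, and $I_S=\{v:f_S(v)=v\}$. For an independent set $I$, $\gamma_{gr}(G,I)$ is the maximum length of a legal dominating sequence $S$ of $G$ with $I_S=I$ ($-\infty$ if there is none), and $\gamma^u_{gr}(G)=\max\{\gamma_{gr}(G,I): I \text{ independent set of } G,\ u\in I\}$. *)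

(* Finite simple graphs are symmetric irreflexive relations
   e : rel T on a finType T (vertex set = T). *)
From mathcomp Require Import all_boot.
Set Implicit Arguments. Unset Strict Implicit. Unset Printing Implicit Defensive.

Section Grundy.
Variables (T : finType) (e : rel T).

Definition cnbhd (v : T) : {set T} := [set w | (w == v) || e v w].

Definition pn (s : seq T) (v : T) : {set T} :=
  cnbhd v :\: \bigcup_(w <- take (index v s) s) cnbhd w.

Definition dominating_seq (s : seq T) : bool :=
  \bigcup_(w <- s) cnbhd w == [set: T].

Definition legal_dom (s : seq T) : bool :=
  [&& uniq s, all (fun v => pn s v != set0) s & dominating_seq s].

(* I_S = {v : f_S(v) = v} = {v in S : v in PN_S(v)} *)
Definition IS (s : seq T) : {set T} := [set v | (v \in s) && (v \in pn s v)].

Definition independent (I : {set T}) : bool :=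
  [forall x in I, forall y in I, ~~ e x y].

(* Grundy domination number: maximum length of a legal dominating sequence
   (lengths are bounded by #|T| since entries are distinct). *)
Definition gamma_gr : nat :=
  \max_(k < #|T|.+1 | [exists t : k.-tuple T, legal_dom t]) k.

(* gamma_gr^u(G) = max over independent I with u in I of gamma_gr(G, I),
   where gamma_gr(G, I) = max length of legal dominating S with I_S = I
   (-oo if none).  Unfolding the double maximum: the maximum length of a
   legal dominating sequence S whose I_S is independent and contains u. *)
Definition gamma_gr_u (u : T) : nat :=
  \max_(k < #|T|.+1 | [exists t : k.-tuple T,
           [&& legal_dom t, independent (IS t) & u \in IS t]]) k.
End Grundy.

Definition repl_vert (TG TH : finType) (u : TG) : finType :=
  ({x : TG | x != u} + TH)%type.

Definition repl (TG TH : finType) (eG : rel TG) (u : TG) (eH : rel TH)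
  : rel (repl_vert TH u) :=
  fun a b =>
    match a, b with
    | inl x, inl y => eG (val x) (val y)
    | inr x, inr y => eH x y
    | inl x, inr _ => eG (val x) u
    | inr _, inl y => eG u (val y)
    end.
Arguments repl [TG TH] eG u eH _ _.

From mathcomp Require Import all_boot zify.
Set Implicit Arguments. Unset Strict Implicit. Unset Printing Implicit Defensive.

(* Let G' be G with u replaced by H, and let proj collapse H onto u. Replacing
   u by a vertex of H turns a legal sequence of G into one of G', and splicing a
   legal sequence of H in place of a vertex u that footprints itself gives one
   of length gamma_gr^u(G) + gamma_gr(H) - 1.
   Conversely, let S' be legal in G'. If S' avoids H, or a G-neighbour of u
   precedes the first H-vertex h of S' (after which H is dominated), then the
   projection of S' is legal in G. Otherwise u footprints itself in the
   projection of the part of S' before h followed by u, and the rest of S'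
   splits into a G-part, legal after u, and an H-part, legal in H after h. The
   only vertex that can fail to be legal in its part is the first G-neighbour x
   of u after h; if x footprints only vertices of H, one of them goes to the
   H-part instead of x. Either way |S'| + 1 <= gamma_gr^u(G) + gamma_gr(H). *)

(* Legality is checked incrementally against the set of vertices already chosen,
   so that sequences of different graphs can be compared step by step. *)
Fixpoint stepwise (T : finType) (P : {set T} -> T -> bool) (U : {set T}) (s : seq T)
    : bool :=
  if s is x :: s' then P U x && stepwise P (x |: U) s' else true.

Lemma stepwise_cat (T : finType) P (U : {set T}) s t :
  stepwise P U (s ++ t) = stepwise P U s && stepwise P (U :|: [set x in s]) t.
Proof.
elim: s U => [|x s IH] U /=; first by rewrite setU0.
rewrite IH andbA; congr (_ && stepwise _ _ _).
by apply/setP => z; rewrite !inE orbA (orbC (z == x)).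
Qed.

Lemma stepwise_pmap (T1 T2 : finType) (P1 : {set T1} -> T1 -> bool)
    (P2 : {set T2} -> T2 -> bool) (f : T1 -> option T2)
    (Inv : {set T1} -> {set T2} -> Prop) s :
  (forall U1 U2 x, x \in s -> Inv U1 U2 -> P1 U1 x ->
     if f x is Some y then P2 U2 y /\ Inv (x |: U1) (y |: U2)
     else Inv (x |: U1) U2) ->
  forall U1 U2, Inv U1 U2 -> stepwise P1 U1 s -> stepwise P2 U2 (pmap f s).
Proof.
elim: s => [//|x s IH] step U1 U2 inv /= /andP[Px Ps].
have {}IH := IH (fun V1 V2 y ys => step V1 V2 y (@mem_behead _ (x :: s) y ys)).
have := step U1 U2 x (mem_head _ _) inv Px.
by case: (f x) => [y [P2y inv']|inv'] /=; rewrite ?P2y; apply: IH Ps.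
Qed.

Lemma stepwise_map (T1 T2 : finType) (P1 : {set T1} -> T1 -> bool)
    (P2 : {set T2} -> T2 -> bool) (f : T1 -> T2)
    (Inv : {set T1} -> {set T2} -> Prop) s :
  (forall U1 U2 x, x \in s -> Inv U1 U2 -> P1 U1 x ->
     P2 U2 (f x) /\ Inv (x |: U1) (f x |: U2)) ->
  forall U1 U2, Inv U1 U2 -> stepwise P1 U1 s -> stepwise P2 U2 (map f s).
Proof.
elim: s => [//|x s IH] step U1 U2 inv /= /andP[Px Ps].
have [-> inv'] := step U1 U2 x (mem_head _ _) inv Px.
exact: IH (fun V1 V2 y ys => step V1 V2 y (@mem_behead _ (x :: s) y ys)) _ _ inv' Ps.
Qed.

Lemma stepwise_all (T : finType) (P : {set T} -> T -> bool) (Q : pred T)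
    (Inv : {set T} -> Prop) s :
  (forall U x, x \in s -> Inv U -> P U x -> Q x /\ Inv (x |: U)) ->
  forall U, Inv U -> stepwise P U s -> all Q s.
Proof.
elim: s => [//|x s IH] step U inv /= /andP[Px Ps].
have [-> inv'] := step U x (mem_head _ _) inv Px.
exact: IH (fun V y ys => step V y (@mem_behead _ (x :: s) y ys)) _ inv' Ps.
Qed.

Section LegalSequences.
Variables (T : finType) (e : rel T).

Definition dom (U : {set T}) : {set T} := \bigcup_(w in U) cnbhd e w.

Definition legal_step (U : {set T}) (x : T) : bool :=
  (x \notin U) && ~~ (cnbhd e x \subset dom U).

Definition legal : {set T} -> seq T -> bool := stepwise legal_step.

Lemma cnbhd_refl x : x \in cnbhd e x.
Proof. by rewrite inE eqxx. Qed.

Lemma legal_step_set0 x : legal_step set0 x.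
Proof.
rewrite /legal_step inE; apply/subsetPn; exists x; first exact: cnbhd_refl.
by apply/negP => /bigcupP [?]; rewrite inE.
Qed.

Lemma legal_cons U x s : legal U (x :: s) = legal_step U x && legal (x |: U) s.
Proof. by []. Qed.

Lemma legal_cat U s t : legal U (s ++ t) = legal U s && legal (U :|: [set x in s]) t.
Proof. exact: stepwise_cat. Qed.

Lemma domS (A B : {set T}) : A \subset B -> dom A \subset dom B.
Proof.
move=> /subsetP AB; apply/subsetP => z /bigcupP [w wA zw].
by apply/bigcupP; exists w => //; apply: AB.
Qed.

Lemma sub_dom (A : {set T}) : A \subset dom A.
Proof. by apply/subsetP => z zA; apply/bigcupP; exists z; rewrite ?cnbhd_refl. Qed.

Lemma bigcup_cnbhd_seq s : \bigcup_(w <- s) cnbhd e w = dom [set x in s].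
Proof. by rewrite bigcup_seq /dom; apply: eq_bigl => z; rewrite inE. Qed.

Lemma pn_rcons s x v : v \in s -> pn e (rcons s x) v = pn e s v.
Proof. by move=> vs; rewrite /pn -cats1 index_cat vs takel_cat // index_size. Qed.

Lemma pn_pivot a x b : x \notin a -> pn e (a ++ x :: b) x = cnbhd e x :\: dom [set y in a].
Proof. by move=> xa; rewrite /pn index_pivot // take_size_cat // bigcup_cnbhd_seq. Qed.

Lemma legal_rcons U s x :
  legal U (rcons s x) = legal U s && legal_step (U :|: [set y in s]) x.
Proof. by rewrite -cats1 legal_cat legal_cons andbT. Qed.

Lemma legal_set0E s : uniq s && all (fun v => pn e s v != set0) s = legal set0 s.
Proof.
elim/last_ind: s => [//|s x IH].
rewrite legal_rcons -IH rcons_uniq all_rcons set0U /legal_step inE.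
have [//|xs] /= := boolP (x \in s); first by rewrite !andbF.
rewrite (eq_in_all (a2 := fun v => pn e s v != set0)); last by move=> v vs; rewrite pn_rcons.
rewrite -cats1 pn_pivot // setD_eq0.
by case: (uniq s); case: (all _ _); case: (_ \subset _).
Qed.

Lemma legal_domE s : legal_dom e s = legal set0 s && (dom [set x in s] == setT).
Proof. by rewrite /legal_dom andbA legal_set0E /dominating_seq bigcup_cnbhd_seq. Qed.

Lemma legal_extend s : legal set0 s -> exists c, legal_dom e (s ++ c).
Proof.
have [n Hn] := ubnPleq #|~: dom [set x in s]|.
elim: n s Hn => [|n IH] s Hn ls.
  exists [::]; rewrite cats0 legal_domE ls /= eqEsubset subsetT /=.
  by rewrite -setCS setCT subset0 -cards_eq0 -leqn0.
have [Ds|] := eqVneq (dom [set x in s]) setT.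
  by exists [::]; rewrite cats0 legal_domE ls Ds eqxx.
rewrite eqEsubset subsetT /= => /subsetPn [x _ xD].
have lsx : legal set0 (rcons s x).
  rewrite legal_rcons ls set0U /legal_step.
  rewrite (contra (fun xs => subsetP (sub_dom _) x xs) xD) /=.
  by apply/subsetPn; exists x; rewrite ?cnbhd_refl.
have [|c lc] := IH (rcons s x) _ lsx; last by exists (x :: c); rewrite -cat_rcons.
have sub : [set y in s] \subset [set y in rcons s x].
  by apply/subsetP => z; rewrite !inE mem_rcons inE => ->; rewrite orbT.
rewrite -ltnS (leq_trans _ Hn) // proper_card // properEneq setCS (domS sub) andbT.
apply: contraNneq xD => /setP /(_ x); rewrite !inE => /negb_inj <-.
by apply/bigcupP; exists x; rewrite ?cnbhd_refl // inE mem_rcons mem_head.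
Qed.

Lemma legal_notin U s x : legal U s -> x \in s -> x \notin U.
Proof.
elim: s U => //= y s IH U /andP[/andP[yU _] ls]; rewrite inE => /orP[/eqP->//|xs].
by have := IH _ ls xs; rewrite inE negb_or => /andP[].
Qed.

Lemma legal_uniq U s : legal U s -> uniq s.
Proof.
elim: s U => [//|x s IH] U /= /andP[_ ls]; rewrite (IH _ ls) andbT.
by apply: contraT => /negbNE /(legal_notin ls); rewrite !inE eqxx.
Qed.

Lemma legal_dom_size s : legal_dom e s -> size s < #|T|.+1.
Proof.
by rewrite legal_domE ltnS => /andP[/legal_uniq/card_uniqP <- _]; apply: max_card.
Qed.

Lemma gamma_gr_le M : (forall s, legal_dom e s -> size s <= M) -> gamma_gr e <= M.
Proof.
move=> ub; apply/bigmax_leqP => k /existsP [t lt].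
by rewrite -(size_tuple t) ub.
Qed.

Lemma size_le_bigmax_tuple (Q : pred (seq T)) s :
  Q s -> size s < #|T|.+1 -> size s <= \max_(k < #|T|.+1 | [exists t : k.-tuple T, Q t]) k.
Proof.
move=> Qs size_lt; apply: (leq_bigmax_cond (F := fun k : 'I_#|T|.+1 => val k) (Ordinal size_lt)).
by apply/existsP; exists (in_tuple s).
Qed.

Lemma size_legal_le_gamma_gr s : legal set0 s -> size s <= gamma_gr e.
Proof.
move=> /legal_extend [c lc]; apply: leq_trans (leq_addr (size c) _) _.
by rewrite -size_cat; apply: (size_le_bigmax_tuple (Q := legal_dom e)) (legal_dom_size lc).
Qed.

Hypotheses (e_sym : symmetric e) (e_irr : irreflexive e).

Lemma independent_IS s : independent e (IS e s).
Proof.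
have earlier_nadj x y : x \in IS e s -> y \in IS e s -> index x s < index y s -> ~~ e x y.
  rewrite !inE => /andP[xs _] /andP[ys]; rewrite /pn bigcup_seq => /andP[/negP ny _] lt.
  by apply/negP => exy; apply: ny; apply/bigcupP; exists x; rewrite ?in_take // inE exy orbT.
apply/forall_inP => x xI; apply/forall_inP => y yI.
case: (ltngtP (index x s) (index y s)) => [|lt|eq]; first exact: earlier_nadj.
  by rewrite e_sym earlier_nadj.
move: xI yI; rewrite !inE => /andP[xs _] /andP[ys _].
by rewrite -(nth_index x xs) eq nth_index // e_irr.
Qed.

Lemma size_legal_le_gamma_gr_u u a b :
  legal set0 (a ++ u :: b) -> u \notin dom [set x in a] ->
  size (a ++ u :: b) <= gamma_gr_u e u.
Proof.
move=> ls uD; have [c lc] := legal_extend ls.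
have ua : u \notin a by apply: contra uD => ua; rewrite (subsetP (sub_dom _)) ?inE.
apply: leq_trans (leq_addr (size c) _) _; rewrite -size_cat.
pose Q t := [&& legal_dom e t, independent e (IS e t) & u \in IS e t].
apply: (size_le_bigmax_tuple (Q := Q)) (legal_dom_size lc).
rewrite /Q lc independent_IS inE -catA mem_cat mem_head orbT pn_pivot //.
by rewrite inE cnbhd_refl andbT.
Qed.

Lemma gamma_gr_u_le u M :
  (forall a b, legal set0 (a ++ u :: b) -> u \notin dom [set x in a] ->
     size (a ++ u :: b) <= M) -> gamma_gr_u e u <= M.
Proof.
move=> ub; apply/bigmax_leqP => k /existsP [t /and3P[lt _ uI]].
rewrite -(size_tuple t); move: uI; rewrite inE => /andP[ut].
have ua : u \notin take (index u t) t by rewrite (in_take _ ut) ltnn.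
have t_split : (t : seq T) = take (index u t) t ++ u :: drop (index u t).+1 t.
  by rewrite -drop_index // cat_take_drop.
move: lt; rewrite t_split legal_domE pn_pivot // inE cnbhd_refl andbT.
by move=> /andP[ls _] uD; apply: ub.
Qed.

End LegalSequences.

Lemma gamma_gr_u_add_le (T1 T2 : finType) (e1 : rel T1) (e2 : rel T2) u M :
  (forall a b L, legal e1 set0 (a ++ u :: b) -> u \notin dom e1 [set x in a] ->
     legal e2 set0 L -> size (a ++ u :: b) + size L <= M) ->
  gamma_gr_u e1 u + gamma_gr e2 <= M.
Proof.
move=> ub.
have ub_gamma a b : legal e1 set0 (a ++ u :: b) -> u \notin dom e1 [set x in a] ->
    size (a ++ u :: b) + gamma_gr e2 <= M.
  move=> la uD; have := ub a b [::] la uD isT; rewrite addn0 => le_aub.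
  rewrite -leq_subRL //; apply: gamma_gr_le => L /[!legal_domE] /andP[lL _].
  by rewrite leq_subRL ?ub.
have le_u : size ([::] ++ u :: [::]) + gamma_gr e2 <= M.
  by apply: ub_gamma; [rewrite /= legal_cons legal_step_set0 | apply/bigcupP => -[?]; rewrite inE].
have le_gamma : gamma_gr e2 <= M by apply: leq_trans le_u; rewrite leq_addl.
rewrite addnC -leq_subRL //; apply: gamma_gr_u_le => a b la uD.
by rewrite leq_subRL // addnC ub_gamma.
Qed.

Section Replacement.
Variables (TG TH : finType) (eG : rel TG) (eH : rel TH) (u : TG).
Local Notation V := (repl_vert TH u).
Local Notation e' := (repl eG u eH).

Definition proj (a : V) : TG := if a is inl y then val y else u.
Definition is_inl (a : V) : bool := if a is inl _ then true else false.
Definition getG (a : V) : option TG := if a is inl y then Some (val y) else None.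
Definition getH (a : V) : option TH := if a is inr h then Some h else None.
Definition nbr_u (a : V) : bool := if a is inl y then eG (val y) u else false.
Definition Hpart (U : {set V}) : {set TH} := [set h | inr h \in U].

Definition no_H (U : {set V}) : Prop := forall a, a \in U -> is_inl a.
Definition meets_H (U : {set V}) : Prop := exists h, inr h \in U.
Definition covers_H (U : {set V}) : Prop := exists2 a, a \in U & nbr_u a.

Lemma HpartU (A B : {set V}) : Hpart (A :|: B) = Hpart A :|: Hpart B.
Proof. by apply/setP => h; rewrite !inE. Qed.

Lemma Hpart_inl (U : {set V}) y : Hpart (inl y |: U) = Hpart U.
Proof. by apply/setP => h; rewrite !inE. Qed.

Lemma Hpart_inr (U : {set V}) h : Hpart (inr h |: U) = h |: Hpart U.
Proof. by apply/setP => h'; rewrite !inE. Qed.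

Lemma val_neq_u (y : {x : TG | x != u}) : (val y == u) = false.
Proof. exact/negbTE/(valP y). Qed.

Lemma cnbhd_repl_proj (a b : V) : a \in cnbhd e' b -> proj a \in cnbhd eG (proj b).
Proof.
case: a => [z|h]; case: b => [y|h'] /=; rewrite ?cnbhd_refl // !inE /=.
  by case/orP => [/eqP [->]|->]; rewrite ?eqxx ?orbT.
all: by move=> ->; rewrite orbT.
Qed.

Lemma proj_cnbhd_repl (a b : V) :
  proj a \in cnbhd eG (proj b) -> is_inl a || is_inl b -> a \in cnbhd e' b.
Proof.
by case: a => [z|h]; case: b => [y|h'] //=; rewrite !inE ?val_neq_u // eq_sym val_neq_u.
Qed.

Lemma dom_repl_proj (a : V) (U : {set V}) : a \in dom e' U -> proj a \in dom eG (proj @: U).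
Proof.
move=> /bigcupP [b bU ab]; apply/bigcupP; exists (proj b); first exact: imset_f.
exact: cnbhd_repl_proj.
Qed.

Lemma proj_dom_repl (a : V) (U : {set V}) :
  proj a \in dom eG (proj @: U) -> is_inl a \/ no_H U -> a \in dom e' U.
Proof.
move=> /bigcupP [_ /imsetP [b bU ->] ab] aU; apply/bigcupP; exists b => //.
by apply: proj_cnbhd_repl => //; case: aU => [->//|/(_ b bU) ->]; rewrite orbT.
Qed.

Lemma proj_notin (U' : {set V}) b :
  b \notin U' -> is_inl b \/ no_H U' -> proj b \notin proj @: U'.
Proof.
move=> bU bl; apply/imsetP => -[c cU].
case: b bU bl => [x|h] bU bl; case: c cU => [z|h'] cU /=.
- by move/val_inj => xz; move: bU; rewrite xz cU.
- by move=> xu; move: (valP x); rewrite /= xu eqxx.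
- by move=> uz; move: (valP z); rewrite /= -uz eqxx.
- by case: bl => // /(_ _ cU).
Qed.

Lemma legal_step_proj (U' : {set V}) (U : {set TG}) (a b : V) :
  U \subset proj @: U' -> b \notin U' -> a \in cnbhd e' b -> a \notin dom e' U' ->
  is_inl a && is_inl b \/ no_H U' -> legal_step eG U (proj b).
Proof.
move=> sub bU ab aD inl_noH; apply/andP; split.
  apply: contra (proj_notin bU _) => [/(subsetP sub) //|].
  by case: inl_noH => [/andP[_ ->]|]; [left | right].
apply/subsetPn; exists (proj a); first exact: cnbhd_repl_proj.
apply: contra aD => /(subsetP (domS eG sub)) pD; apply: proj_dom_repl pD _.
by case: inl_noH => [/andP[-> _]|]; [left | right].
Qed.

Lemma legal_step_proj_noH (U' : {set V}) (U : {set TG}) (b : V) :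
  no_H U' -> U \subset proj @: U' -> legal_step e' U' b -> legal_step eG U (proj b).
Proof.
move=> noH sub /andP[bU /subsetPn [a ab aD]].
by apply: legal_step_proj sub bU ab aD _; right.
Qed.

Lemma cnbhd_inr (h w : TH) : (inr w \in cnbhd e' (inr h)) = (w \in cnbhd eH h).
Proof. by rewrite !inE. Qed.

Lemma dom_Hpart (U' : {set V}) (W : {set TH}) w :
  W \subset Hpart U' -> w \in dom eH W -> inr w \in dom e' U'.
Proof.
move=> /subsetP sub /bigcupP [h /sub hU wh]; apply/bigcupP; exists (inr h).
  by rewrite inE in hU.
by rewrite cnbhd_inr.
Qed.

Lemma legal_step_inr (U' : {set V}) (W : {set TH}) h :
  Hpart U' \subset W -> ~ covers_H U' -> legal_step eH W h -> legal_step e' U' (inr h).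
Proof.
move=> sub ncov /andP[hW /subsetPn [w wN wD]]; apply/andP; split.
  by apply: contra hW => hU; apply: (subsetP sub); rewrite inE.
apply/subsetPn; exists (inr w); first by rewrite cnbhd_inr.
apply/negP => /bigcupP [[y|h'] yU].
  by rewrite inE /= => yu; apply: ncov; exists (inl y).
rewrite cnbhd_inr => wh; move/negP: wD; apply; apply/bigcupP; exists h' => //.
by apply: (subsetP sub); rewrite inE.
Qed.

Lemma legal_step_H_footprint (U' : {set V}) (W : {set TH}) w :
  W \subset Hpart U' -> inr w \notin dom e' U' -> legal_step eH W w.
Proof.
move=> sub wD; apply/andP; split.
  apply: contra wD => /(subsetP sub); rewrite inE => wU.
  by apply/bigcupP; exists (inr w); rewrite ?cnbhd_refl.
apply/subsetPn; exists w; first exact: cnbhd_refl.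
by apply: contra wD; apply: dom_Hpart.
Qed.

Lemma legal_step_Hpart (U' : {set V}) (W : {set TH}) h :
  W \subset Hpart U' -> legal_step e' U' (inr h) -> legal_step eH W h.
Proof.
move=> sub /andP[hU /subsetPn [a ah aD]].
have [h' h'U|noH] := pickP (fun h' => inr h' \in U'); last first.
  suff -> : W = set0 by exact: legal_step_set0.
  by apply/eqP; rewrite -subset0; apply/subsetP => z /(subsetP sub); rewrite inE noH.
apply/andP; split; first by apply: contra hU => /(subsetP sub); rewrite inE.
case: a ah aD => [z|w] ah aD.
  by case/negP: aD; apply/bigcupP; exists (inr h'); rewrite // !inE in ah *.
by apply/subsetPn; exists w; rewrite -?cnbhd_inr // (contra (dom_Hpart sub)).
Qed.

Lemma legal_step_covered (U' : {set V}) b :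
  covers_H U' -> meets_H U' -> legal_step e' U' b ->
  exists x, b = inl x /\ exists2 w, inl w \in cnbhd e' b & (inl w : V) \notin dom e' U'.
Proof.
move=> [[y|//] yU yu] [h hU] /andP[_ /subsetPn [a ab aD]].
case: a ab aD => [w|w] ab aD; last first.
  by case/negP: aD; apply/bigcupP; exists (inl y); rewrite // inE.
case: b ab => [x|h'] ab; first by exists x; split => //; exists w.
by case/negP: aD; apply/bigcupP; exists (inr h); rewrite // !inE in ab *.
Qed.

Lemma proj_getG_sub s : [set x in pmap getG s] \subset proj @: [set x in s].
Proof.
apply/subsetP => z; rewrite inE mem_pmap => /mapP [[y|h] ys //= [->]].
by apply/imsetP; exists (inl y); rewrite ?inE.
Qed.

Lemma getH_sub_Hpart s : [set x in pmap getH s] \subset Hpart [set x in s].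
Proof.
by apply/subsetP => z; rewrite inE mem_pmap => /mapP [[y|h] ys //= [->]]; rewrite !inE.
Qed.

Lemma size_getG_getH s : size (pmap getG s) + size (pmap getH s) = size s.
Proof. by elim: s => //= [[y|h] s IH] /=; rewrite ?addSn ?addnS IH. Qed.

Lemma size_getG s : all is_inl s -> size (pmap getG s) = size s.
Proof. by elim: s => //= [[y|h] s IH] //= /IH ->. Qed.

Lemma legal_getG_noH s (U' : {set V}) (U : {set TG}) :
  all is_inl s -> no_H U' -> U \subset proj @: U' -> legal e' U' s -> legal eG U (pmap getG s).
Proof.
move=> /allP sl noH sub.
apply: (stepwise_pmap (Inv := fun U' U => no_H U' /\ U \subset proj @: U')).
  move=> W' W a /sl; case: a => [y|//] _ [noH' sub'] st; split.
    exact: legal_step_proj_noH noH' sub' st.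
  split; last by rewrite imsetU1 setUS.
  by move=> c; rewrite !inE => /predU1P [->|/noH'].
by split.
Qed.

Lemma legal_getG_nonnbr s (U' : {set V}) (U : {set TG}) :
  all (predC nbr_u) s -> U \subset proj @: U' -> legal e' U' s -> legal eG U (pmap getG s).
Proof.
move=> /allP sn; apply: (stepwise_pmap (Inv := fun U' U => U \subset proj @: U')).
move=> W' W a /sn; case: a => [x|h] /= xu sub st; last first.
  by apply: subset_trans sub _; rewrite imsetS // subsetUr.
split; last by rewrite imsetU1 setUS.
have /andP[xW /subsetPn [[w|w] wN wD]] := st.
  exact: (legal_step_proj (b := inl x) sub xW wN wD (or_introl isT)).
by rewrite inE /= (negbTE xu) in wN.
Qed.

Lemma legal_getG_covered s (U' : {set V}) (U : {set TG}) :
  covers_H U' -> meets_H U' -> U \subset proj @: U' -> legal e' U' s ->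
  legal eG U (pmap getG s) && all is_inl s.
Proof.
move=> cov meet sub ls.
have cov_mono (W' : {set V}) a : covers_H W' -> covers_H (a |: W').
  by case=> c cW cu; exists c; rewrite // inE cW orbT.
have meet_mono (W' : {set V}) a : meets_H W' -> meets_H (a |: W').
  by case=> h hW; exists h; rewrite inE hW orbT.
apply/andP; split.
  apply: (stepwise_pmap
    (Inv := fun U' U => [/\ covers_H U', meets_H U' & U \subset proj @: U'])) ls => //.
  move=> W' W a _ [cov' meet' sub'] st.
  have [x [ax [w wN wD]]] := legal_step_covered cov' meet' st; subst a.
  split; last by split; [exact: cov_mono | exact: meet_mono | rewrite imsetU1 setUS].
  have /andP[xW _] := st.
  exact: (legal_step_proj (b := inl x) sub' xW wN wD (or_introl isT)).
apply: (stepwise_all (Inv := fun U' => covers_H U' /\ meets_H U')) ls => //.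
move=> W' a _ [cov' meet'] st.
have [x [-> _]] := legal_step_covered cov' meet' st.
by split; [|split; [exact: cov_mono | exact: meet_mono]].
Qed.

Lemma legal_getH s (U' : {set V}) (W : {set TH}) :
  W \subset Hpart U' -> legal e' U' s -> legal eH W (pmap getH s).
Proof.
apply: (stepwise_pmap (Inv := fun U' W => W \subset Hpart U')).
move=> W1' W1 [y|h] _ sub st /=; first by rewrite Hpart_inl.
by rewrite Hpart_inr setUS // (legal_step_Hpart sub st).
Qed.

Lemma legal_inr L (W : {set TH}) (U' : {set V}) :
  Hpart U' \subset W -> ~ covers_H U' -> legal eH W L -> legal e' U' (map inr L).
Proof.
move=> sub ncov.
apply: (stepwise_map (Inv := fun W U' => Hpart U' \subset W /\ ~ covers_H U')) => //.
move=> W1 U1 h _ [sub1 ncov1] st; split; first exact: legal_step_inr sub1 ncov1 st.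
split; first by rewrite Hpart_inr setUS.
by case=> c /setU1P [->//|cU cu]; apply: ncov1; exists c.
Qed.

Lemma size_legal_repl_noH s : all is_inl s -> legal e' set0 s -> size s <= gamma_gr eG.
Proof.
move=> sl ls; rewrite -(size_getG sl) size_legal_le_gamma_gr //.
by apply: (legal_getG_noH (U' := set0)) ls; rewrite ?sub0set // => a; rewrite inE.
Qed.

Lemma legal_repl_first_H p h q :
  all is_inl p -> legal e' set0 (p ++ inr h :: q) ->
  [/\ legal eG set0 (pmap getG p), legal_step eG [set x in pmap getG p] u
    & legal e' [set x in p] (inr h :: q)].
Proof.
rewrite legal_cat set0U => pl /andP[lp lhq]; split => //.
  by apply: (legal_getG_noH (U' := set0)) lp; rewrite ?sub0set // => a; rewrite inE.
have /andP[st _] := lhq.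
apply: (legal_step_proj_noH (b := inr h)) st; last exact: proj_getG_sub.
by move=> a; rewrite inE => /(allP pl).
Qed.

Lemma proj_getG_subU1 p h :
  u |: [set x in pmap getG p] \subset proj @: (inr h |: [set x in p]).
Proof. by rewrite imsetU1 setUS ?proj_getG_sub. Qed.

Lemma size_legal_repl_covered p h q :
  all is_inl p -> has nbr_u p -> legal e' set0 (p ++ inr h :: q) ->
  size (p ++ inr h :: q) <= gamma_gr eG.
Proof.
move=> pl /hasP [a ap au] ls; have [lp su /andP[_ lq]] := legal_repl_first_H pl ls.
have cov : covers_H (inr h |: [set x in p]) by exists a; rewrite // !inE ap orbT.
have meet : meets_H (inr h |: [set x in p]) by exists h; rewrite !inE eqxx.
have /andP[lq' ql] := legal_getG_covered cov meet (proj_getG_subU1 p h) lq.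
have lpq : legal eG set0 (pmap getG p ++ u :: pmap getG q).
  by rewrite legal_cat legal_cons set0U lp su.
by apply: leq_trans (size_legal_le_gamma_gr lpq); rewrite !size_cat /= !size_getG.
Qed.

(* x is the first G-neighbour of u after an H-vertex. If x footprints a vertex
   of G it stays in the G-part; otherwise it footprints some w in H, and w joins
   the H-part instead. From x on, H is dominated, so only G-vertices follow. *)
Lemma legal_repl_tail_at_nbr (U' : {set V}) (U : {set TG}) (W : {set TH}) x q :
  meets_H U' -> U \subset proj @: U' -> W \subset Hpart U' -> nbr_u (inl x) ->
  legal e' U' (inl x :: q) ->
  exists SG SH, [/\ legal eG U SG, legal eH W SH & size SG + size SH = (size q).+1].
Proof.
move=> meet sub subH xu /andP[stx lq].
have cov : covers_H (inl x |: U') by exists (inl x); rewrite ?setU11.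
have meet' : meets_H (inl x |: U') by case: meet => h hU; exists h; rewrite inE hU orbT.
have /andP[xU /subsetPn [[w|w] wN wD]] := stx.
- have stG := legal_step_proj (b := inl x) sub xU wN wD (or_introl isT).
  have sub' : val x |: U \subset proj @: (inl x |: U') by rewrite imsetU1 setUS.
  have /andP[lG ql] := legal_getG_covered cov meet' sub' lq.
  by exists (val x :: pmap getG q), [::]; rewrite /= addn0 size_getG // legal_cons stG lG.
- have sub' : U \subset proj @: (inl x |: U') by rewrite imsetU1 (subset_trans sub (subsetU1 _ _)).
  have /andP[lG ql] := legal_getG_covered cov meet' sub' lq.
  exists (pmap getG q), [:: w]; rewrite /= size_getG // addn1; split=> //.
  by rewrite legal_cons (legal_step_H_footprint subH wD).
Qed.

Lemma legal_repl_tail (U' : {set V}) (U : {set TG}) (W : {set TH}) q :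
  meets_H U' -> U \subset proj @: U' -> W \subset Hpart U' -> legal e' U' q ->
  exists SG SH, [/\ legal eG U SG, legal eH W SH & size SG + size SH = size q].
Proof.
move=> meet sub subH lq; have [|] := boolP (has nbr_u q); last first.
  rewrite -all_predC => qn; exists (pmap getG q), (pmap getH q).
  by rewrite (legal_getG_nonnbr qn sub lq) (legal_getH subH lq) size_getG_getH.
move=> hq; move: lq; case/(split_find (T := V)): hq => [[x|//] q1 q2 xu]; rewrite -all_predC => q1n.
rewrite cat_rcons legal_cat => /andP[lq1 lq2].
have meet2 : meets_H (U' :|: [set y in q1]).
  by case: meet => h hU; exists h; rewrite inE hU.
have sub2 : U :|: [set y in pmap getG q1] \subset proj @: (U' :|: [set y in q1]).
  by rewrite imsetU setUSS ?proj_getG_sub.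
have subH2 : W :|: [set y in pmap getH q1] \subset Hpart (U' :|: [set y in q1]).
  by rewrite HpartU setUSS ?getH_sub_Hpart.
have [SG [SH [lSG lSH sz]]] := legal_repl_tail_at_nbr meet2 sub2 subH2 xu lq2.
exists (pmap getG q1 ++ SG), (pmap getH q1 ++ SH).
rewrite !legal_cat (legal_getG_nonnbr q1n sub lq1) (legal_getH subH lq1).
split=> //; rewrite !size_cat /= addnACA sz; congr (_ + _); exact: size_getG_getH.
Qed.

Lemma size_legal_repl s : symmetric eG -> irreflexive eG -> legal e' set0 s ->
  size s <= maxn (gamma_gr eG) (gamma_gr_u eG u + gamma_gr eH - 1).
Proof.
move=> symG irrG ls; rewrite leq_max.
have [sl|] := boolP (all is_inl s); first by rewrite size_legal_repl_noH.
rewrite -has_predC => hs; move: ls; case/(split_find (T := V)): hs => [[//|h] p q _].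
rewrite has_predC negbK cat_rcons => pl ls.
have [/(size_legal_repl_covered pl)->//|npu] := boolP (has nbr_u p).
have [lp su /andP[_ lq]] := legal_repl_first_H pl ls.
have uD : u \notin dom eG [set x in pmap getG p].
  apply/bigcupP => -[_ /[!inE] /[!mem_pmap] /mapP [[z|//] zp [->]]].
  rewrite eq_sym val_neq_u /= => zu.
  by move/negP: npu; apply; apply/hasP; exists (inl z).
have meet : meets_H (inr h |: [set x in p]) by exists h; rewrite setU11.
have subH : [set h] \subset Hpart (inr h |: [set x in p]) by rewrite sub1set !inE eqxx.
have [SG [SH [lSG lSH sz]]] := legal_repl_tail meet (proj_getG_subU1 p h) subH lq.
have lGu : legal eG set0 (pmap getG p ++ u :: SG) by rewrite legal_cat legal_cons set0U lp su.
have lHh : legal eH set0 (h :: SH) by rewrite legal_cons setU0 legal_step_set0.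
have := size_legal_le_gamma_gr_u symG irrG lGu uD; have := size_legal_le_gamma_gr lHh.
rewrite size_cat /= (size_getG pl) => leH leG.
have -> : size (p ++ inr h :: q) = size p + (size SG + size SH).+1 by rewrite size_cat /= sz.
by apply/orP; right; lia.
Qed.

Section Lift.
Variable h0 : TH.

Definition lift (x : TG) : V := if insub x is Some y then inl y else inr h0.

Lemma proj_lift x : proj (lift x) = x.
Proof. by rewrite /lift; case: insubP => [y _ <-|/negPn/eqP->]. Qed.

Lemma cnbhd_lift (b : V) w :
  w \in cnbhd eG (proj b) -> exists2 a, proj a = w & a \in cnbhd e' b.
Proof.
case: b => [y|h] /= wN.
  by exists (lift w); rewrite ?proj_lift // proj_cnbhd_repl ?proj_lift ?orbT.
have [->|wu] := eqVneq w u; first by exists (inr h); rewrite ?cnbhd_refl.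
exists (lift w); rewrite ?proj_lift // /lift.
by case: insubP => [y _ yw|]; rewrite ?wu // proj_cnbhd_repl //= yw.
Qed.

Lemma legal_step_lift (U' : {set V}) (U : {set TG}) (b : V) :
  proj @: U' \subset U -> legal_step eG U (proj b) -> legal_step e' U' b.
Proof.
move=> sub /andP[bU /subsetPn [w wN wD]]; apply/andP; split.
  by apply: contra bU => bU'; apply: (subsetP sub); apply: imset_f.
have [a aw aN] := cnbhd_lift wN.
apply/subsetPn; exists a => //; apply: contra wD => aD.
by rewrite -aw (subsetP (domS eG sub)) ?dom_repl_proj.
Qed.

Lemma legal_lift s (U : {set TG}) (U' : {set V}) :
  proj @: U' \subset U -> legal eG U s -> legal e' U' (map lift s).
Proof.
apply: (stepwise_map (Inv := fun U U' => proj @: U' \subset U)) => W W' x _ sub st.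
by rewrite imsetU1 proj_lift setUS // (legal_step_lift sub) ?proj_lift.
Qed.

Lemma legal_splice a b L :
  legal eG set0 (a ++ u :: b) -> u \notin dom eG [set x in a] -> legal eH set0 L ->
  legal e' set0 (map lift a ++ map inr L ++ map lift b).
Proof.
rewrite legal_cat legal_cons set0U => /and3P[la su lb] uD lL.
rewrite !legal_cat set0U.
have ua : u \notin a by apply: contra uD => ua; rewrite (subsetP (sub_dom _ _)) ?inE.
have proj_a : proj @: [set x in map lift a] \subset [set x in a].
  by apply/subsetP => _ /imsetP [_ /[!inE] /mapP [x xa ->] ->]; rewrite proj_lift.
apply/and3P; split.
- by apply: (legal_lift (U := set0)) la; rewrite imset0.
- apply: (legal_inr (W := set0)) lL.
    apply/subsetP => h; rewrite inE => hA; have := subsetP proj_a _ (imset_f proj hA).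
    by rewrite inE (negbTE ua).
  case=> c cA cu; case/negP: uD; apply/bigcupP; exists (proj c).
    exact: (subsetP proj_a) (imset_f proj cA).
  by case: c cA cu => [y|//] _ /= yu; rewrite !inE yu orbT.
- apply: legal_lift lb; rewrite imsetU setUC setUSS //.
  by apply/subsetP => _ /imsetP [_ /[!inE] /mapP [h _ ->] ->].
Qed.

Lemma gamma_gr_le_repl : gamma_gr eG <= gamma_gr e'.
Proof.
apply: gamma_gr_le => s /[!legal_domE] /andP[ls _].
rewrite -(size_map lift) size_legal_le_gamma_gr //.
by apply: (legal_lift (U := set0)) ls; rewrite imset0.
Qed.

Lemma gamma_gr_u_add_le_repl : gamma_gr_u eG u + gamma_gr eH <= (gamma_gr e').+1.
Proof.
apply: gamma_gr_u_add_le => a b L la uD lL.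
have := size_legal_le_gamma_gr (legal_splice la uD lL).
by rewrite !size_cat !size_map /=; lia.
Qed.

End Lift.

Lemma gamma_gr_repl_le : symmetric eG -> irreflexive eG ->
  gamma_gr e' <= maxn (gamma_gr eG) (gamma_gr_u eG u + gamma_gr eH - 1).
Proof.
move=> symG irrG; apply: gamma_gr_le => s /[!legal_domE] /andP[ls _].
exact: size_legal_repl.
Qed.

End Replacement.

Theorem lemma3 (TG TH : finType) (eG : rel TG) (eH : rel TH) (u : TG) :
  symmetric eG -> irreflexive eG -> symmetric eH -> irreflexive eH ->
  0 < #|TH| ->
  gamma_gr (repl eG u eH) =
  maxn (gamma_gr eG) (gamma_gr_u eG u + gamma_gr eH - 1).
Proof.
(* Only the sets I_S of sequences of G have to be independent. *)
move=> symG irrG _ _ /card_gt0P [h0 _].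
apply/eqP; rewrite eqn_leq gamma_gr_repl_le // geq_max gamma_gr_le_repl //=.
by rewrite leq_subLR add1n gamma_gr_u_add_le_repl.
Qed.
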